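(* Let $M,N$ be weights of $\mathbb{R}^m,\mathbb{R}^n$, and let $A\in\mathbb{R}^{m\times n}$ with $MA=AN$ (i.e. $I\circ A=A\circ I$) and $\mathcal{R}(A\circ I)$ closed. Let $K\subseteq\mathbb{R}^n$ be a closed cone with $A^{[\dagger]}\circ A\circ K\subseteq K$. Put $$C=A\circ I\circ K,\qquad D=(A^{[\dagger]})^{[*]}\circ I\circ K^{[*]}.$$ Then the following are equivalent: (i) $D$ is acute; (ii) $(A^{[*]}\circ A)^{[\dagger]}\circ K^{[*]}\subseteq K+\mathcal{N}(A\circ I)$; (iii) $C$ is obtuse.
   Context: A weight is a real symmetric matrix $W$ with $W^2=I$. $\mathbb{R}^m$ and $\mathbb{R}^n$ carry weights $M\in\mathbb{R}^{m\times m}$ and $N\in\mathbb{R}^{n\times n}$, respectively. The indefinite inner product on the space with weight $W$ is $[x,y]=\langle x,Wy\rangle$. Indefinite matrix product: if $B$ has $p$ columns and $C'$ has $p$ rows (or is a vector in $\mathbb{R}^p$), $p\in\{m,n\}$, and $W$ is the weight of $\mathbb{R}^p$, then $B\circ C':=BWC'$. $I$ denotes an identity matrix of the appropriate size. Indefinite adjoint of $B\in\mathbb{R}^{p\times q}$: $B^{[*]}:=W_qB^TW_p$, where $W_p,W_q$ are the weights of $\mathbb{R}^p,\mathbb{R}^q$. Indefinite Moore–Penrose inverse: for $B\in\mathbb{R}^{p\times q}$, $B^{[\dagger]}$ is the unique $X\in\mathbb{R}^{q\times p}$ such that - $B\circ X\circ B=B$, - $X\circ B\circ X=X$, - $(B\circ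 X)^{[*]}=B\circ X$, - $(X\circ B)^{[*]}=X\circ B$. It equals $W_qB^\dagger W_p$. Range and null space: for a matrix $B$ with $q$ columns, $\mathcal{R}(B)=\{B\circ x:x\in\mathbb{R}^q\}$ and $\mathcal{N}(B)=\{x\in\mathbb{R}^q:B\circ x=0\}$. A cone is a nonempty set closed under addition and under multiplication by nonnegative scalars. For $S$ a subset of $\mathbb{R}^p$ with weight $W$, the dual is $S^{[*]}=\{x\in\mathbb{R}^p:[x,t]\ge0\ \forall t\in S\}$. For a matrix $B$ and a set $S$, $B\circ S=\{B\circ s:s\in S\}$. The sum of sets is the Minkowski sum. A cone $L$ is acute if $[x,y]\ge0$ for all $x,y\in L$, equivalently $L\subseteq L^{[*]}$. The cone $C=A\circ I\circ K$ is called obtuse if $(A\circ I\circ K)^{[*]}\cap\mathcal{R}(A\circ I)$ is acute. *)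

From Stdlib Require Import Reals ClassicalEpsilon FunctionalExtensionality.
From HB Require Import structures.
From mathcomp Require Import all_boot all_order all_algebra.
Set Implicit Arguments. Unset Strict Implicit. Unset Printing Implicit Defensive.
Import Order.TTheory GRing.Theory Num.Theory.

Definition Reqb (x y : R) : bool := if Req_EM_T x y then true else false.
Lemma Reqb_axiom : Equality.axiom Reqb.
Proof. by move=> x y; rewrite /Reqb; case: Req_EM_T => h; constructor. Qed.
HB.instance Definition _ := hasDecEq.Build R Reqb_axiom.

Definition R_find (P : pred R) (n : nat) : option R :=
  if excluded_middle_informative (exists x, P x)
  then Some (epsilon (inhabits R0) (fun x => P x)) else None.
Lemma R_find_correct P n x : R_find P n = Some x -> P x.
Proof.
rewrite /R_find; case: excluded_middle_informative => // h [<-].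
exact: (epsilon_spec (inhabits R0) (fun x => P x) h).
Qed.
Lemma R_find_complete (P : pred R) : (exists x, P x) -> exists n, R_find P n.
Proof. by move=> h; exists 0%N; rewrite /R_find; case: excluded_middle_informative. Qed.
Lemma R_find_ext (P Q : pred R) : P =1 Q -> R_find P =1 R_find Q.
Proof. by move=> h; have -> : P = Q by apply: functional_extensionality. Qed.
HB.instance Definition _ := hasChoice.Build R R_find_correct R_find_complete R_find_ext.

Lemma R_addA : associative Rplus. Proof. by move=> x y z; rewrite Rplus_assoc. Qed.
Lemma R_addC : commutative Rplus. Proof. exact: Rplus_comm. Qed.
Lemma R_add0 : left_id R0 Rplus. Proof. exact: Rplus_0_l. Qed.
Lemma R_addN : left_inverse R0 Ropp Rplus. Proof. exact: Rplus_opp_l. Qed.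
HB.instance Definition _ := GRing.isZmodule.Build R R_addA R_addC R_add0 R_addN.

Lemma R_mulA : associative Rmult. Proof. by move=> x y z; rewrite Rmult_assoc. Qed.
Lemma R_mulC : commutative Rmult. Proof. exact: Rmult_comm. Qed.
Lemma R_mul1 : left_id R1 Rmult. Proof. exact: Rmult_1_l. Qed.
Lemma R_mulDl : left_distributive Rmult Rplus. Proof. by move=> x y z; rewrite Rmult_plus_distr_r. Qed.
Lemma R_one_neq0 : R1 != R0. Proof. by apply/eqP; exact: R1_neq_R0. Qed.
HB.instance Definition _ := GRing.Zmodule_isComNzRing.Build R R_mulA R_mulC R_mul1 R_mulDl R_one_neq0.

Local Open Scope ring_scope.
Definition R_inv (x : R) : R := if Reqb x R0 then R0 else Rinv x.
Lemma R_mulVf (x : R) : x != 0 -> (R_inv x * x)%R = 1%R.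
Proof.
move=> /eqP h; rewrite /R_inv /Reqb; destruct (Req_EM_T x R0) as [e|ne]; first by case: h.
exact: (Rinv_l x h).
Qed.
Lemma R_inv0 : R_inv 0 = 0.
Proof. by rewrite /R_inv /Reqb; case: Req_EM_T. Qed.
HB.instance Definition _ := GRing.ComNzRing_isField.Build R R_mulVf R_inv0.

Definition Rleb (x y : R) : bool := if Rle_dec x y then true else false.
Definition Rltb (x y : R) : bool := if Rlt_dec x y then true else false.
Lemma RlebP x y : reflect (Rle x y) (Rleb x y).
Proof. by rewrite /Rleb; case: Rle_dec => h; constructor. Qed.
Lemma RltbP x y : reflect (Rlt x y) (Rltb x y).
Proof. by rewrite /Rltb; case: Rlt_dec => h; constructor. Qed.

Lemma R_le0_add (x y : R) : Rleb 0 x -> Rleb 0 y -> Rleb 0 (x + y).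
Proof. move=> /RlebP hx /RlebP hy; apply/RlebP; exact: Rplus_le_le_0_compat. Qed.
Lemma R_le0_mul (x y : R) : Rleb 0 x -> Rleb 0 y -> Rleb 0 (x * y).
Proof. move=> /RlebP hx /RlebP hy; apply/RlebP; exact: Rmult_le_pos. Qed.
Lemma R_le0_anti (x : R) : Rleb 0 x -> Rleb x 0 -> x = 0.
Proof. move=> /RlebP hx /RlebP hy; exact: Rle_antisym. Qed.
Lemma R_sub_ge0 (x y : R) : Rleb 0 (y - x) = Rleb x y.
Proof.
apply/idP/idP => /RlebP h; apply/RlebP.
- have := Rplus_le_compat_r x _ _ h.
  by rewrite /GRing.add /GRing.opp /= Rplus_0_l Rplus_assoc Rplus_opp_l Rplus_0_r.
- have := Rplus_le_compat_r (- x)%R _ _ h.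
  by rewrite /GRing.add /GRing.opp /= Rplus_opp_r.
Qed.
Lemma R_le0_total (x : R) : Rleb 0 x || Rleb x 0.
Proof.
case: (Rle_dec R0 x) => h; first by apply/orP; left; apply/RlebP.
by apply/orP; right; apply/RlebP; apply: Rlt_le; apply: Rnot_le_lt.
Qed.
Lemma R_normN (x : R) : Rabs (- x) = Rabs x.
Proof. exact: Rabs_Ropp. Qed.
Lemma R_ge0_norm (x : R) : Rleb 0 x -> Rabs x = x.
Proof. by move=> /RlebP h; rewrite Rabs_right //; apply: Rle_ge. Qed.
Lemma R_lt_def (x y : R) : Rltb x y = (y != x) && Rleb x y.
Proof.
apply/idP/idP.
- move=> /RltbP h; apply/andP; split; last by apply/RlebP; apply: Rlt_le.
  by apply/eqP => e; move: h; rewrite e; apply: Rlt_irrefl.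
- move=> /andP[/eqP ne /RlebP le]; apply/RltbP.
  by case: (Rle_lt_or_eq_dec _ _ le) => // e; case: ne.
Qed.
HB.instance Definition _ := Num.IntegralDomain_isLeReal.Build R
  R_le0_add R_le0_mul R_le0_anti R_sub_ge0 R_le0_total R_normN R_ge0_norm R_lt_def.


Definition is_weight (p : nat) (W : 'M[R]_p) : Prop :=
  W^T = W /\ W *m W = 1%:M.

Definition iprod (p : nat) (W : 'M[R]_p) (x y : 'cV[R]_p) : R :=
  (x^T *m (W *m y)) ord0 ord0.

(* Indefinite matrix product B o C' := B W C', where B has p columns and W is *)
Definition imul (p q r : nat) (W : 'M[R]_p) (B : 'M[R]_(q, p)) (C : 'M[R]_(p, r))
  : 'M[R]_(q, r) := B *m W *m C.

Definition iadj (p q : nat) (Wp : 'M[R]_p) (Wq : 'M[R]_q) (B : 'M[R]_(p, q))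
  : 'M[R]_(q, p) := Wq *m B^T *m Wp.

Definition is_imp (p q : nat) (Wp : 'M[R]_p) (Wq : 'M[R]_q)
    (B : 'M[R]_(p, q)) (X : 'M[R]_(q, p)) : Prop :=
  [/\ imul Wp (imul Wq B X) B = B,
      imul Wq (imul Wp X B) X = X,
      iadj Wp Wp (imul Wq B X) = imul Wq B X &
      iadj Wq Wq (imul Wp X B) = imul Wp X B].

(* B^[dagger]: THE X satisfying the four equations (it exists and is unique). *)
Definition imp (p q : nat) (Wp : 'M[R]_p) (Wq : 'M[R]_q) (B : 'M[R]_(p, q))
  : 'M[R]_(q, p) := epsilon (inhabits 0) (is_imp Wp Wq B).

Definition vset (p : nat) := 'cV[R]_p -> Prop.

Definition vsubset (p : nat) (S T : vset p) : Prop := forall x, S x -> T x.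
Definition vinter (p : nat) (S T : vset p) : vset p := fun x => S x /\ T x.
Definition msum (p : nat) (S T : vset p) : vset p :=
  fun z => exists x y, S x /\ T y /\ z = x + y.

Definition imgs (p q : nat) (W : 'M[R]_p) (B : 'M[R]_(q, p)) (S : vset p) : vset q :=
  fun y => exists s, S s /\ y = imul W B s.

Definition irange (p q : nat) (W : 'M[R]_p) (B : 'M[R]_(q, p)) : vset q :=
  fun y => exists x, y = imul W B x.
Definition inull (p q : nat) (W : 'M[R]_p) (B : 'M[R]_(q, p)) : vset p :=
  fun x => imul W B x = 0.

Definition is_cone (p : nat) (K : vset p) : Prop :=
  [/\ exists x, K x,
      forall x y, K x -> K y -> K (x + y) &
      forall (a : R) x, 0 <= a -> K x -> K (a *: x)].

Definition enorm (p : nat) (x : 'cV[R]_p) : R :=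
  sqrt (\sum_(i < p) (x i ord0) ^+ 2).
Definition is_closed (p : nat) (S : vset p) : Prop :=
  forall x, (forall eps : R, 0 < eps -> exists y, S y /\ enorm (x - y) < eps) -> S x.

Definition idual (p : nat) (W : 'M[R]_p) (S : vset p) : vset p :=
  fun x => forall t, S t -> 0 <= iprod W x t.

Definition acute (p : nat) (W : 'M[R]_p) (L : vset p) : Prop :=
  forall x y, L x -> L y -> 0 <= iprod W x y.

Definition obtuse (m n : nat) (M : 'M[R]_m) (N : 'M[R]_n) (A : 'M[R]_(m, n))
    (K : vset n) : Prop :=
  acute M (vinter (idual M (imgs N (imul N A 1%:M) K)) (irange N (imul N A 1%:M))).

From Stdlib Require Import Reals ClassicalEpsilon Classical.
From HB Require Import structures.
From mathcomp Require Import all_boot all_order all_algebra.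
From mathcomp Require Import ring lra.
Set Implicit Arguments. Unset Strict Implicit. Unset Printing Implicit Defensive.
Import Order.TTheory GRing.Theory Num.Theory.
Local Open Scope ring_scope.

(* Because M A = A N, the weights commute with the Moore-Penrose inverse
   Y = A^+ (Y M = N Y), so A^[+] = Y, (A^[+])^[*] = Y^T and
   (A^[*] o A)^[+] = N Y Y^T.  Put T = (A^[*] o A)^[+] o K^[*].  The identity
   [Y^T s, Y^T s']_M = [s, (A^[*] o A)^[+] o s']_N shows that D is acute iff
   T is contained in K^[*][*], which equals K by the bipolar theorem for closed
   cones (proved with nearest points).  The orthogonal projection Y A fixes T
   and maps K into K, so T is contained in K + N(A) iff it is contained in K.
   Finally D lies in C^[*] /\ R(A), which gives (iii) => (i), and (ii) => (iii)
   follows from (A^[*] o A)^[+] o A^[*] = A^[+]. *)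

Section MoorePenrose.
Variable F : realFieldType.

Definition is_mp p q (B : 'M[F]_(p, q)) (Y : 'M[F]_(q, p)) : Prop :=
  [/\ B *m Y *m B = B, Y *m B *m Y = Y, (B *m Y)^T = B *m Y & (Y *m B)^T = Y *m B].

Definition mpinv p q (B : 'M[F]_(p, q)) : 'M[F]_(q, p) :=
  epsilon (inhabits 0) (is_mp B).

Lemma mulmx_tr_eq0 k r (w : 'M[F]_(k, r)) : w *m w^T = 0 -> w = 0.
Proof.
move=> /matrixP ww0; apply/matrixP => i j; rewrite mxE; apply/eqP.
have /eqP := ww0 i i; rewrite !mxE psumr_eq0 => [/allP/(_ j (mem_index_enum j))|l _].
  by rewrite mxE mulf_eq0 orbb.
by rewrite mxE -expr2 sqr_ge0.
Qed.

Lemma row_free_gram_unit k r (G : 'M[F]_(k, r)) : row_free G -> G *m G^T \in unitmx.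
Proof.
move=> fG; rewrite -row_free_unit; apply: inj_row_free => v vGG0.
have vG0 : v *m G = 0.
  by apply: mulmx_tr_eq0; rewrite trmx_mul mulmxA -(mulmxA v) vGG0 mul0mx.
by apply: (row_free_inj fG); rewrite vG0 mul0mx.
Qed.

Lemma is_mp_full_rank_factor p r q (Fb : 'M[F]_(p, r)) (G : 'M[F]_(r, q)) :
  Fb^T *m Fb \in unitmx -> G *m G^T \in unitmx ->
  let iF := invmx (Fb^T *m Fb) in let iG := invmx (G *m G^T) in
  is_mp (Fb *m G) (G^T *m iG *m iF *m Fb^T).
Proof.
move=> uF uG iF iG.
have GiG s (X : 'M_(r, s)) : G *m (G^T *m (iG *m X)) = X.
  by rewrite !mulmxA mulmxV // mul1mx.
have iFF s (X : 'M_(s, r)) : X *m iF *m Fb^T *m Fb = X.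
  by rewrite -!mulmxA mulVmx // mulmx1.
have iGs : iG^T = iG by rewrite /iG trmx_inv trmx_mul trmxK.
have iFs : iF^T = iF by rewrite /iF trmx_inv trmx_mul trmxK.
have BY : Fb *m G *m (G^T *m iG *m iF *m Fb^T) = Fb *m iF *m Fb^T.
  by rewrite -!mulmxA GiG.
have YB : G^T *m iG *m iF *m Fb^T *m (Fb *m G) = G^T *m iG *m G.
  by rewrite !mulmxA iFF.
split.
- by rewrite BY !mulmxA iFF.
- by rewrite YB -!mulmxA GiG.
- by rewrite BY !trmx_mul trmxK iFs mulmxA.
- by rewrite YB !trmx_mul trmxK iGs mulmxA.
Qed.

Lemma is_mp_exists p q (B : 'M[F]_(p, q)) : exists Y, is_mp B Y.
Proof.
have uF : (col_base B)^T *m col_base B \in unitmx.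
  have := @row_free_gram_unit _ _ (col_base B)^T.
  by rewrite trmxK; apply; rewrite /row_free mxrank_tr; exact: col_base_full.
have uG := row_free_gram_unit (row_base_free B).
by rewrite -(mulmx_base B); eexists; exact: is_mp_full_rank_factor.
Qed.

Lemma is_mp_uniq p q (B : 'M[F]_(p, q)) Y Z : is_mp B Y -> is_mp B Z -> Y = Z.
Proof.
case=> [BYB YBY BYs YBs] [BZB ZBZ BZs ZBs].
have eY : Y = Y *m B *m Z.
  have e : (B *m Y)^T *m (B *m Z)^T = (B *m Y)^T by rewrite -trmx_mul !mulmxA BZB.
  transitivity (Y *m (B *m Y) *m (B *m Z)); last by rewrite !mulmxA YBY.
  by rewrite -BYs -BZs -mulmxA e BYs mulmxA YBY.
have eZ : Z = Y *m B *m Z.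
  have e : (Y *m B)^T *m (Z *m B)^T = (Z *m B)^T.
    by rewrite -trmx_mul -!mulmxA (mulmxA B Y B) BYB.
  transitivity (Y *m B *m (Z *m B) *m Z); last by rewrite -(mulmxA _ (Z *m B)) ZBZ.
  by rewrite -YBs -ZBs e ZBs ZBZ.
by rewrite {1}eY -eZ.
Qed.

Lemma mpinvP p q (B : 'M[F]_(p, q)) : is_mp B (mpinv B).
Proof. by apply: epsilon_spec; exact: is_mp_exists. Qed.

Lemma mpinv_eq p q (B : 'M[F]_(p, q)) Y : is_mp B Y -> mpinv B = Y.
Proof. exact/is_mp_uniq/mpinvP. Qed.

Lemma mpinv_isometryMl r p q (Q : 'M[F]_(r, p)) (B : 'M[F]_(p, q)) :
  Q^T *m Q = 1%:M -> mpinv (Q *m B) = mpinv B *m Q^T.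
Proof.
move=> QQ; have [BYB YBY BYs YBs] := mpinvP B; apply: mpinv_eq.
set Y := mpinv B in BYB YBY BYs YBs *.
have QK s (X : 'M_(p, s)) : Q^T *m (Q *m X) = X by rewrite mulmxA QQ mul1mx.
rewrite /is_mp.
have -> : Q *m B *m (Y *m Q^T) = Q *m (B *m Y) *m Q^T by rewrite !mulmxA.
have -> : Y *m Q^T *m (Q *m B) = Y *m B by rewrite -mulmxA QK.
split.
- by rewrite -!mulmxA QK (mulmxA B) BYB.
- by rewrite mulmxA YBY.
- by rewrite trmx_mul trmxK trmx_mul BYs mulmxA.
- exact: YBs.
Qed.

Lemma mpinv_isometryMr p q r (B : 'M[F]_(p, q)) (Q : 'M[F]_(q, r)) :
  Q *m Q^T = 1%:M -> mpinv (B *m Q) = Q^T *m mpinv B.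
Proof.
move=> QQ; have [BYB YBY BYs YBs] := mpinvP B; apply: mpinv_eq.
set Y := mpinv B in BYB YBY BYs YBs *.
have QK s (X : 'M_(s, q)) : X *m Q *m Q^T = X by rewrite -mulmxA QQ mulmx1.
rewrite /is_mp.
have -> : B *m Q *m (Q^T *m Y) = B *m Y by rewrite mulmxA QK.
have -> : Q^T *m Y *m (B *m Q) = Q^T *m (Y *m B) *m Q by rewrite !mulmxA.
split.
- by rewrite !mulmxA BYB.
- by rewrite !mulmxA QK -!mulmxA (mulmxA Y) YBY.
- exact: BYs.
- by rewrite trmx_mul trmx_mul trmxK YBs mulmxA.
Qed.

Lemma mpinv_gram p q (B : 'M[F]_(p, q)) :
  mpinv (B^T *m B) = mpinv B *m (mpinv B)^T.
Proof.
have [BYB YBY BYs YBs] := mpinvP B; set Y := mpinv B in BYB YBY BYs YBs *.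
have YtBt : Y^T *m B^T = B *m Y by rewrite -trmx_mul BYs.
have BtYt : B^T *m Y^T = Y *m B by rewrite -trmx_mul YBs.
have YBBt : Y *m B *m B^T = B^T by rewrite -YBs -trmx_mul mulmxA BYB.
have YBYB : Y *m B *m (Y *m B) = Y *m B by rewrite mulmxA YBY.
have GY : B^T *m B *m (Y *m Y^T) = Y *m B.
  have -> : B^T *m B *m (Y *m Y^T) = B^T *m (B *m Y) *m Y^T by rewrite !mulmxA.
  by rewrite -YtBt !mulmxA -(mulmxA _ B^T) BtYt YBYB.
have YG : Y *m Y^T *m (B^T *m B) = Y *m B.
  by rewrite mulmxA -(mulmxA Y) YtBt mulmxA YBY.
apply: mpinv_eq; split.
- by rewrite GY mulmxA YBBt.
- by rewrite YG mulmxA YBY.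
- by rewrite GY.
- by rewrite YG.
Qed.

End MoorePenrose.

Lemma weight_tr p (W : 'M[R]_p) : is_weight W -> W^T = W.
Proof. by case. Qed.

Lemma weightK p (W : 'M[R]_p) : is_weight W -> forall q (X : 'M[R]_(p, q)), W *m (W *m X) = X.
Proof. by case=> _ WW q X; rewrite mulmxA WW mul1mx. Qed.

Lemma weight_orthogonal p (W : 'M[R]_p) : is_weight W -> W^T *m W = 1%:M.
Proof. by case=> ->. Qed.

Lemma imul_weight1 p (W : 'M[R]_p) q s (B : 'M[R]_(q, p)) (x : 'M[R]_(p, s)) :
  is_weight W -> imul W (imul W B 1%:M) x = B *m x.
Proof. by move=> wW; rewrite /imul mulmx1 -!mulmxA weightK. Qed.

Section IndefiniteMoorePenrose.
Variables (p q : nat) (Wp : 'M[R]_p) (Wq : 'M[R]_q) (B : 'M[R]_(p, q)).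
Hypotheses (wp : is_weight Wp) (wq : is_weight Wq).

Lemma is_imp_of_mp Y : is_mp B Y -> is_imp Wp Wq B (Wq *m Y *m Wp).
Proof.
case=> [BYB YBY BYs YBs].
have [Wps _] := wp; have [Wqs WqWq] := wq.
have BYBt s (X : 'M_(p, s)) : Y^T *m (B^T *m X) = B *m (Y *m X).
  by rewrite mulmxA -trmx_mul BYs mulmxA.
have YBYr s (X : 'M_(p, s)) : Y *m (B *m (Y *m X)) = Y *m X.
  by rewrite !mulmxA YBY.
rewrite /is_imp /imul /iadj; split;
  rewrite ?trmx_mul ?Wps ?Wqs -!mulmxA ?(weightK wp) ?(weightK wq).
- by rewrite mulmxA BYB.
- by rewrite YBYr.
- by rewrite BYBt.
- by rewrite WqWq mulmx1 -trmx_mul YBs.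
Qed.

Lemma is_mp_of_imp X : is_imp Wp Wq B X -> is_mp B (Wq *m X *m Wp).
Proof.
rewrite /is_imp /imul /iadj => -[BXB XBX BXs XBs].
have [Wps WpWp] := wp; have [Wqs WqWq] := wq.
have BXst : (B *m Wq *m X)^T = Wp *m (B *m Wq *m X) *m Wp.
  by rewrite -{2}BXs -!mulmxA (weightK wp) WpWp mulmx1.
have XBst : (X *m Wp *m B)^T = Wq *m (X *m Wp *m B) *m Wq.
  by rewrite -{2}XBs -!mulmxA (weightK wq) WqWq mulmx1.
split.
- by rewrite !mulmxA BXB.
- have XBXr s (Z : 'M_(p, s)) : X *m (Wp *m (B *m (Wq *m (X *m Z)))) = X *m Z.
    by rewrite !mulmxA XBX.
  by rewrite -!mulmxA XBXr.
- by rewrite !mulmxA trmx_mul Wps BXst -!mulmxA (weightK wp).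
- have -> : Wq *m X *m Wp *m B = Wq *m (X *m Wp *m B) by rewrite !mulmxA.
  by rewrite trmx_mul XBst Wqs -!mulmxA WqWq mulmx1.
Qed.

Lemma impE : imp Wp Wq B = Wq *m mpinv B *m Wp.
Proof.
have impP : is_imp Wp Wq B (imp Wp Wq B).
  by apply: epsilon_spec; exists (Wq *m mpinv B *m Wp); apply/is_imp_of_mp/mpinvP.
have [_ WpWp] := wp.
by rewrite (mpinv_eq (is_mp_of_imp impP)) -!mulmxA (weightK wq) WpWp mulmx1.
Qed.

End IndefiniteMoorePenrose.

Section Dot.
Variable F : realFieldType.

Definition dot n (u v : 'cV[F]_n) : F := \sum_(i < n) u i ord0 * v i ord0.

Lemma dotE n (u v : 'cV[F]_n) : (u^T *m v) ord0 ord0 = dot u v.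
Proof. by rewrite mxE; apply: eq_bigr => i _; rewrite mxE. Qed.

Lemma dotC n (u v : 'cV[F]_n) : dot u v = dot v u.
Proof. by apply: eq_bigr => i _; rewrite mulrC. Qed.

Lemma dotDl n (u v w : 'cV[F]_n) : dot (u + v) w = dot u w + dot v w.
Proof. by rewrite /dot -big_split; apply: eq_bigr => i _; rewrite mxE mulrDl. Qed.

Lemma dotZl n a (u w : 'cV[F]_n) : dot (a *: u) w = a * dot u w.
Proof. by rewrite /dot mulr_sumr; apply: eq_bigr => i _; rewrite mxE mulrA. Qed.

Lemma dotNl n (u w : 'cV[F]_n) : dot (- u) w = - dot u w.
Proof. by rewrite -scaleN1r dotZl mulN1r. Qed.

Lemma dotDr n (u v w : 'cV[F]_n) : dot w (u + v) = dot w u + dot w v.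
Proof. by rewrite dotC dotDl !(dotC w). Qed.

Lemma dotZr n a (u w : 'cV[F]_n) : dot w (a *: u) = a * dot w u.
Proof. by rewrite dotC dotZl dotC. Qed.

Lemma dotNr n (u w : 'cV[F]_n) : dot w (- u) = - dot w u.
Proof. by rewrite dotC dotNl dotC. Qed.

Lemma dot0l n (u : 'cV[F]_n) : dot 0 u = 0.
Proof. by rewrite -(scale0r (0 : 'cV_n)) dotZl mul0r. Qed.

Lemma dot_mulmxl p q (B : 'M[F]_(p, q)) u v : dot (B *m u) v = dot u (B^T *m v).
Proof. by rewrite -!dotE trmx_mul mulmxA. Qed.

Lemma dot_coord_le n (u : 'cV[F]_n) c : u c ord0 ^+ 2 <= dot u u.
Proof.
rewrite /dot (bigD1 c) //= expr2 lerDl.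
by apply: sumr_ge0 => i _; rewrite -expr2 sqr_ge0.
Qed.

Lemma dot_ge0 n (u : 'cV[F]_n) : 0 <= dot u u.
Proof. by apply: sumr_ge0 => i _; rewrite -expr2 sqr_ge0. Qed.

Lemma dot_eq0 n (u : 'cV[F]_n) : dot u u = 0 -> u = 0.
Proof.
move=> /eqP; rewrite psumr_eq0 => [/allP uu0|j _]; last by rewrite -expr2 sqr_ge0.
apply/colP => j; rewrite mxE; have := uu0 j (mem_index_enum j).
by rewrite mulf_eq0 orbb => /eqP; rewrite (ord1 ord0).
Qed.

Lemma dot_parallelogram n (x a b : 'cV[F]_n) :
  dot (a - b) (a - b) = 2 * dot (x - a) (x - a) + 2 * dot (x - b) (x - b)
                        - 4 * dot (x - 2^-1 *: (a + b)) (x - 2^-1 *: (a + b)).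
Proof.
rewrite !(dotDl, dotNl, dotZl, dotDr, dotNr, dotZr) (dotC b a) (dotC x a) (dotC x b).
by field.
Qed.

Lemma dot_shift n (w v : 'cV[F]_n) t :
  dot (w - t *: v) (w - t *: v) = dot w w - 2 * t * dot w v + t ^+ 2 * dot v v.
Proof. by rewrite !(dotDl, dotNl, dotZl, dotDr, dotNr, dotZr) (dotC v w); ring. Qed.

End Dot.

Lemma iprodE p (W : 'M[R]_p) x y : iprod W x y = dot x (W *m y).
Proof. exact: dotE. Qed.

Lemma iprodC p (W : 'M[R]_p) x y : W^T = W -> iprod W x y = iprod W y x.
Proof. by move=> Ws; rewrite !iprodE dotC dot_mulmxl Ws. Qed.

Lemma dot_weight p (W : 'M[R]_p) u v : is_weight W -> dot (W *m u) (W *m v) = dot u v.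
Proof. by move=> wW; rewrite dot_mulmxl weight_tr // weightK. Qed.

Definition cvg (u : nat -> R) (l : R) :=
  forall e : R, 0 < e -> exists N, forall j, (N <= j)%N -> `|u j - l| < e.

Definition cauchy (u : nat -> R) :=
  forall e : R, 0 < e -> exists N, forall i j, (N <= i)%N -> (N <= j)%N -> `|u i - u j| < e.

Lemma cvgP u l : cvg u l <-> Un_cv u l.
Proof.
split=> ul e /RltbP e0; have [N HN] := ul e e0;
  by exists N => j /ssrnat.leP jN; apply/RltbP; exact: HN.
Qed.

Lemma cvg_ext u v l : (forall j, u j = v j) -> cvg u l -> cvg v l.
Proof. by move=> uv ul e e0; have [N HN] := ul e e0; exists N => j jN; rewrite -uv; exact: HN. Qed.

Lemma cvg_cst c : cvg (fun _ => c) c.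
Proof. by move=> e e0; exists 0%N => j _; rewrite subrr normr0. Qed.

Lemma cvgD u v a b : cvg u a -> cvg v b -> cvg (fun j => u j + v j) (a + b).
Proof. by move=> /cvgP ua /cvgP vb; apply/cvgP; exact: CV_plus. Qed.

Lemma cvgB u v a b : cvg u a -> cvg v b -> cvg (fun j => u j - v j) (a - b).
Proof. by move=> /cvgP ua /cvgP vb; apply/cvgP; exact: CV_minus. Qed.

Lemma cvgM u v a b : cvg u a -> cvg v b -> cvg (fun j => u j * v j) (a * b).
Proof. by move=> /cvgP ua /cvgP vb; apply/cvgP; exact: CV_mult. Qed.

Lemma cvg_uniq u a b : cvg u a -> cvg u b -> a = b.
Proof. by move=> /cvgP ua /cvgP ub; exact: UL_sequence ua ub. Qed.

Lemma cvg_sum (I : Type) (r : seq I) (g : I -> nat -> R) (l : I -> R) :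
  (forall i, cvg (g i) (l i)) ->
  cvg (fun j => \sum_(i <- r) g i j) (\sum_(i <- r) l i).
Proof.
move=> gl; elim: r => [|i r IHr].
  by rewrite big_nil; apply: cvg_ext (cvg_cst 0) => j; rewrite big_nil.
by rewrite big_cons; apply: cvg_ext (cvgD (gl i) IHr) => j; rewrite big_cons.
Qed.

Lemma cauchy_cvg u : cauchy u -> exists l, cvg u l.
Proof.
move=> cu; have [l /cvgP ul] : {l | Un_cv u l}.
  apply: R_complete => e /RltbP e0; have [N HN] := cu e e0.
  by exists N => i j /ssrnat.leP iN /ssrnat.leP jN; apply/RltbP; exact: HN.
by exists l.
Qed.

Lemma archimedean_inv (e : R) : 0 < e -> exists N : nat, (N.+1%:R)^-1 < e.
Proof.
move=> e0; have [N /RltbP Ne] := INR_archimed e 1 (elimT (RltbP _ _) e0).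
have INRE k : INR k = k%:R by elim: k => [//|k IHk]; rewrite S_INR IHk -natr1.
rewrite INRE in Ne; have {}Ne : 1 < N%:R * e := Ne.
by exists N; rewrite -[_^-1]mul1r ltr_pdivrMr ?ltr0n // -natr1 mulrDr mulr1 (mulrC e); lra.
Qed.

Lemma ler_inv_succ (N j : nat) : (N <= j)%N -> (j.+1%:R : R)^-1 <= (N.+1%:R)^-1.
Proof. by move=> jN; rewrite lef_pV2 ?posrE ?ltr0n // ler_nat. Qed.

Lemma cvg_squeeze_inv u (d : R) : (forall j, d <= u j < d + (j.+1%:R)^-1) -> cvg u d.
Proof.
move=> ud e e0; have [N Ne] := archimedean_inv e0.
exists N => j /ler_inv_succ jN; have /andP[dl ur] := ud j.
move: jN ur Ne; set a := j.+1%:R^-1; set b := N.+1%:R^-1 => *.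
by rewrite ger0_norm ?subr_ge0 //; lra.
Qed.

Lemma inf_exists (T : Type) (S : T -> Prop) (g : T -> R) lb :
  (exists t, S t) -> (forall t, S t -> lb <= g t) ->
  exists d, (forall t, S t -> d <= g t) /\
            (forall e, 0 < e -> exists2 t, S t & g t < d + e).
Proof.
move=> [t0 St0] lbg; pose E r := exists2 t, S t & r = - g t.
have bE : bound E.
  exists (- lb) => r [t St ->]; apply/RlebP; change (- g t <= - lb).
  by rewrite lerN2; exact: lbg.
have [m [ub lub]] := completeness E bE (ex_intro _ (- g t0) (ex_intro2 _ _ t0 St0 erefl)).
exists (- m); split=> [t St|e e0].
  have /RlebP gm : Rle (- g t) m by apply: ub; exists t.
  by rewrite lerNl.
apply: NNPP => nex; have /RlebP mme : Rle m (m - e).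
  apply: lub => r [t St ->]; apply/RlebP; change (- g t <= m - e).
  rewrite lerNl opprB leNgt; apply/negP => gt.
  by apply: nex; exists t => //; lra.
have {}mme : m <= m - e := mme; lra.
Qed.

Definition cvgv n (u : nat -> 'cV[R]_n) (v : 'cV[R]_n) :=
  forall c, cvg (fun j => u j c ord0) (v c ord0).

Lemma cauchy_cvgv n (u : nat -> 'cV[R]_n) :
  (forall c, cauchy (fun j => u j c ord0)) -> exists v, cvgv u v.
Proof.
move=> cu; exists (\col_c epsilon (inhabits 0) (cvg (fun j => u j c ord0))) => c.
by rewrite mxE; apply: epsilon_spec; exact: cauchy_cvg.
Qed.

Lemma cvgv_dot n (u : nat -> 'cV[R]_n) v w :
  cvgv u v -> cvg (fun j => dot (w - u j) (w - u j)) (dot (w - v) (w - v)).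
Proof.
move=> uv; have wuv c := cvgB (cvg_cst (w c ord0)) (uv c).
have := cvg_sum (index_enum 'I_n) (fun c => cvgM (wuv c) (wuv c)).
rewrite (_ : \sum_(i <- _) _ = dot (w - v) (w - v)); last first.
  by apply: eq_bigr => c _; rewrite !mxE.
by apply: cvg_ext => j; apply: eq_bigr => c _; rewrite !mxE.
Qed.

Lemma enormE n (u : 'cV[R]_n) : enorm u = sqrt (dot u u).
Proof. by rewrite /enorm; congr sqrt; apply: eq_bigr => i _; rewrite expr2. Qed.

Lemma closed_cvgv n (S : vset n) u v : is_closed S -> (forall j, S (u j)) -> cvgv u v -> S v.
Proof.
move=> Sc Su uv; apply: Sc => e e0.
have [N HN] := cvgv_dot v uv (mulr_gt0 e0 e0).
exists (u N); split => //.
have := HN N (leqnn N); rewrite subrr dot0l subr0 ger0_norm ?dot_ge0 // => d0.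
have -> : e = sqrt (e * e).
  by rewrite sqrt_square //; apply/RlebP; change (0 <= e); exact: ltW.
rewrite enormE; apply/RltbP/sqrt_lt_1_alt; split; last exact/RltbP.
by apply/RlebP; exact: (dot_ge0 (v - u N)).
Qed.

Lemma ge0_of_affine_ge0 (F : realFieldType) (a b : F) :
  0 <= b -> (forall t, 0 < t -> t <= 1 -> 0 <= a + t * b) -> 0 <= a.
Proof.
move=> b0 abt; rewrite leNgt; apply/negP => a0.
have ba0 : 0 < b - a by lra.
(* At this t, (a + t b) (b - a) = - a^2 < 0. *)
set t := - a / (b - a).
have tba : t * (b - a) = - a by rewrite /t mulfVK // gt_eqF.
have t0 : 0 < t by rewrite /t divr_gt0 // oppr_gt0.
have t1 : t <= 1 by rewrite /t ler_pdivrMr // mul1r; lra.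
have : 0 <= (a + t * b) * (b - a) by apply: mulr_ge0; [exact: abt | lra].
have -> : (a + t * b) * (b - a) = - (a * a).
  by rewrite mulrDl -mulrA (mulrC b) mulrA tba; ring.
have : 0 < a * a by rewrite nmulr_rgt0.
lra.
Qed.

Lemma ltr_norm_sqr (F : realDomainType) (a e : F) : 0 <= e -> a ^+ 2 < e ^+ 2 -> `|a| < e.
Proof. by move=> e0; rewrite -real_normK ?num_real // ltr_sqr ?nnegrE. Qed.

Section ClosedCone.
Variables (n : nat) (K : vset n).
Hypotheses (coneK : is_cone K) (closedK : is_closed K).

Lemma cone_nearest x :
  exists2 k, K k & forall k', K k' -> dot (x - k) (x - k) <= dot (x - k') (x - k').
Proof.
have [[k0 Kk0] KD KZ] := coneK; pose f k := dot (x - k) (x - k).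
have [d [df dinf]] := @inf_exists _ K f 0 (ex_intro _ k0 Kk0) (fun k _ => dot_ge0 (x - k)).
pose P j k := K k /\ f k < d + (j.+1%:R)^-1.
have [kk kkP] : exists kk : nat -> 'cV_n, forall j, P j (kk j).
  exists (fun j => epsilon (inhabits 0) (P j)) => j; apply: epsilon_spec.
  have [|k Kk fk] := dinf (j.+1%:R^-1); first by rewrite invr_gt0 ltr0Sn.
  by exists k.
have Kmid a b : K a -> K b -> K (2^-1 *: (a + b)).
  by move=> Ka Kb; apply: KZ (KD _ _ Ka Kb); rewrite invr_ge0 ler0n.
(* K is convex, so d <= f of the midpoint, and the parallelogram law bounds
   |kk i - kk j|^2 by 2 f (kk i) + 2 f (kk j) - 4 d. *)
have cau c : cauchy (fun j => kk j c ord0).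
  move=> e e0; have e20 : 0 < e ^+ 2 / 4 by rewrite divr_gt0 ?exprn_gt0.
  have [N Ne] := archimedean_inv e20.
  exists N => i j /ler_inv_succ iN /ler_inv_succ jN.
  have [Ki fi] := kkP i; have [Kj fj] := kkP j.
  apply: (ltr_norm_sqr (ltW e0)).
  move: (dot_coord_le (kk i - kk j) c) (dot_parallelogram x (kk i) (kk j)).
  move: (df _ (Kmid _ _ Ki Kj)) fi fj iN jN Ne; rewrite /f !mxE.
  set a := i.+1%:R^-1; set b := j.+1%:R^-1; set c' := N.+1%:R^-1 => *.
  lra.
have [ks kks] := cauchy_cvgv cau.
have Kks : K ks := closed_cvgv closedK (fun j => (kkP j).1) kks.
have fks : f ks = d.
  apply: cvg_uniq (cvgv_dot x kks) _; apply: cvg_squeeze_inv => j.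
  by have [Kj fj] := kkP j; rewrite df.
by exists ks => [|k Kk]; last by rewrite -/(f ks) fks; exact: df.
Qed.

Lemma cone_nearest_normal x k v :
  K k -> (forall k', K k' -> dot (x - k) (x - k) <= dot (x - k') (x - k')) ->
  (forall t, 0 < t -> t <= 1 -> K (k + t *: v)) -> dot (x - k) v <= 0.
Proof.
move=> Kk kmin Kkv.
suff : 0 <= - (2 * dot (x - k) v) by lra.
apply: (ge0_of_affine_ge0 (dot_ge0 v)) => t t0 t1.
have := kmin _ (Kkv t t0 t1).
rewrite (_ : x - (k + t *: v) = x - k - t *: v) ?dot_shift; last by rewrite opprD addrA.
by move=> h; rewrite -(pmulr_rge0 _ t0); lra.
Qed.

Theorem closed_cone_bipolar x :
  (forall y, (forall k, K k -> 0 <= dot y k) -> 0 <= dot y x) -> K x.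
Proof.
(* w = x - k is an outer normal of K at the nearest point k; testing x
   against - w gives |w|^2 <= 0. *)
move=> xKK; have [_ KD KZ] := coneK.
have [k Kk kmin] := cone_nearest x; set w := x - k.
have wK k' : K k' -> dot w k' <= 0.
  move=> Kk'; apply: (cone_nearest_normal Kk kmin) => t t0 t1.
  exact: KD Kk (KZ _ _ (ltW t0) Kk').
have wk : 0 <= dot w k.
  rewrite -oppr_le0 -dotNr; apply: (cone_nearest_normal Kk kmin) => t t0 t1.
  by rewrite scalerN -{1}(scale1r k) -scalerBl; apply: KZ Kk; lra.
have wx : dot w x <= 0.
  by rewrite -oppr_ge0 -dotNl; apply: xKK => k' Kk'; rewrite dotNl oppr_ge0; exact: wK.
have wxE : dot w x = dot w w + dot w k by rewrite -dotDr /w subrK.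
have /dot_eq0/eqP : dot w w = 0 by have := dot_ge0 w; lra.
by rewrite subr_eq0 => /eqP ->.
Qed.

Lemma idual_idual_sub W : is_weight W -> vsubset (idual W (idual W K)) K.
Proof.
move=> wW x xKK; apply: closed_cone_bipolar => y yK.
have Wy : idual W K (W *m y) by move=> t Kt; rewrite iprodE dot_weight //; exact: yK.
by have := xKK _ Wy; rewrite iprodE weightK // dotC.
Qed.

Lemma sub_idual_idual W : W^T = W -> vsubset K (idual W (idual W K)).
Proof. by move=> Ws x Kx s sK; rewrite iprodC //; exact: sK. Qed.

Lemma subset_idual_idual W (S : vset n) :
  is_weight W -> vsubset S (idual W (idual W K)) <-> vsubset S K.
Proof.
move=> wW; split=> SK x Sx; first exact/(idual_idual_sub wW)/SK.
exact/(sub_idual_idual (weight_tr wW))/SK.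
Qed.

End ClosedCone.

Lemma msum_kernel p q (B : 'M[R]_(p, q)) (P : 'M[R]_(q, p)) (K Z : vset q) z :
  B *m P *m B = B -> (forall x, Z x <-> B *m x = 0) ->
  (forall s, K s -> K (P *m (B *m s))) ->
  msum K Z z <-> K (P *m (B *m z)).
Proof.
move=> BPB ZE KP; split=> [[a [b [Ka [/ZE Bb ->]]]]|Kz].
  by rewrite mulmxDr Bb addr0; exact: KP.
exists (P *m (B *m z)), (z - P *m (B *m z)); split=> //; split; last by rewrite addrC subrK.
by apply/ZE; rewrite mulmxBr !mulmxA BPB subrr.
Qed.

Section ObtuseCone.
Variables (m n : nat) (M : 'M[R]_m) (N : 'M[R]_n) (A : 'M[R]_(m, n)).
Hypotheses (wM : is_weight M) (wN : is_weight N) (MA : M *m A = A *m N).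

Local Notation Y := (mpinv A).

Lemma mpinv_weight : Y *m M = N *m Y.
Proof.
have [_ NN] := wN; have [_ MM] := wM.
have NYM : N *m Y *m M = Y.
  have MAN : M *m (A *m N) = A by rewrite mulmxA MA -mulmxA NN mulmx1.
  rewrite -[in RHS]MAN mpinv_isometryMl ?weight_orthogonal // mpinv_isometryMr.
    by rewrite !weight_tr // mulmxA.
  by rewrite weight_tr.
by rewrite -{1}NYM -(mulmxA _ M M) MM mulmx1.
Qed.

Lemma mpinv_weight_tr : Y^T *m N = M *m Y^T.
Proof. by rewrite -(weight_tr wN) -(weight_tr wM) -!trmx_mul mpinv_weight. Qed.

Lemma imp_weight : imp M N A = Y.
Proof. by rewrite impE // -mpinv_weight -mulmxA; case: wM => _ ->; rewrite mulmx1. Qed.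

Lemma iadj_imp_weight : iadj N M (imp M N A) = Y^T.
Proof. by rewrite imp_weight /iadj -mulmxA mpinv_weight_tr weightK. Qed.

Lemma imp_gram_weight : imp N N (imul M (iadj M N A) A) = N *m Y *m Y^T.
Proof.
rewrite /imul /iadj -!mulmxA weightK // impE // mpinv_isometryMl ?weight_orthogonal //.
by rewrite mpinv_gram weight_tr // -!mulmxA; case: wN => _ ->; rewrite mulmx1.
Qed.

Lemma imul_imp_weight (s : 'cV[R]_n) : imul N (imul M (imp M N A) A) s = Y *m (A *m s).
Proof. by rewrite imp_weight /imul -!mulmxA (mulmxA M) MA -mulmxA weightK. Qed.

Variable K : vset n.
Hypothesis KYA : forall s, K s -> K (Y *m (A *m s)).

Local Notation T := (imgs N (imp N N (imul M (iadj M N A) A)) (idual N K)).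
Local Notation D := (imgs N (imul N (iadj N M (imp M N A)) 1%:M) (idual N K)).

Lemma imgs_imp_gramE z :
  T z <-> exists s, idual N K s /\ z = N *m (Y *m (Y^T *m (N *m s))).
Proof. by rewrite /imgs /imul imp_gram_weight; split=> -[s [sK ->]]; exists s; rewrite -!mulmxA. Qed.

Lemma imgs_iadj_impE x : D x <-> exists s, idual N K s /\ x = Y^T *m s.
Proof. by rewrite /imgs; split=> -[s [sK ->]]; exists s; rewrite imul_weight1 // iadj_imp_weight. Qed.

Lemma iprod_mpinv_tr s s' :
  iprod M (Y^T *m s) (Y^T *m s') = iprod N s (N *m (Y *m (Y^T *m (N *m s')))).
Proof.
rewrite !iprodE dot_mulmxl trmxK weightK //.
by rewrite (mulmxA Y^T) mpinv_weight_tr -mulmxA.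
Qed.

Lemma acute_D_iff : acute M D <-> vsubset T (idual N (idual N K)).
Proof.
split=> [acD z /imgs_imp_gramE[s' [s'K ->]] s sK | TK x y /imgs_iadj_impE[s [sK ->]] /imgs_iadj_impE[s' [s'K ->]]].
  by rewrite iprodC ?weight_tr // -iprod_mpinv_tr; apply: acD; apply/imgs_iadj_impE;
    [exists s | exists s'].
rewrite iprod_mpinv_tr iprodC ?weight_tr //; apply: TK sK.
by apply/imgs_imp_gramE; exists s'.
Qed.

Lemma msum_null_iff : vsubset T (msum K (inull N (imul N A 1%:M))) <-> vsubset T K.
Proof.
have [AYA _ _ _] := mpinvP A; have [_ YAY _ _] := mpinvP A.
have nullE x : inull N (imul N A 1%:M) x <-> A *m x = 0.
  by rewrite /inull imul_weight1.
have T_fixed z : T z -> Y *m (A *m z) = z.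
  case/imgs_imp_gramE=> s [_ ->]; set v := Y^T *m _.
  rewrite (mulmxA A N) -MA -mulmxA (mulmxA Y M) mpinv_weight -mulmxA.
  by rewrite (mulmxA Y A) (mulmxA _ Y) YAY.
split=> TK z Tz.
  by rewrite -(T_fixed z Tz); apply/(msum_kernel _ AYA nullE KYA)/TK.
by apply/(msum_kernel _ AYA nullE KYA); rewrite T_fixed //; exact: TK.
Qed.

Lemma sub_K_obtuse : vsubset T K -> obtuse M N A K.
Proof.
have [AYA _ AYs _] := mpinvP A; have [_ YAY _ _] := mpinvP A.
move=> TK u u' [uC [z uE]] [u'C [z' u'E]]; subst u u'.
rewrite !imul_weight1 // in uC u'C *.
have AK t : K t -> imgs N (imul N A 1%:M) K (A *m t).
  by move=> Kt; exists t; rewrite imul_weight1.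
(* s = A^[*] o (A z') lies in K^[*], and (A^[*] o A)^[+] o s = Y A z'. *)
pose s := N *m (A^T *m (M *m (A *m z'))).
have sK : idual N K s.
  move=> t Kt; rewrite iprodE dot_weight // dot_mulmxl trmxK dot_mulmxl weight_tr //.
  by rewrite -iprodE; exact: u'C (AK _ Kt).
have Ts : N *m (Y *m (Y^T *m (N *m s))) = Y *m (A *m z').
  rewrite weightK // (mulmxA Y^T) -trmx_mul AYs.
  rewrite (mulmxA Y) (mulmxA Y A Y) YAY (mulmxA Y M) mpinv_weight -mulmxA weightK //.
have KYAz : K (Y *m (A *m z')) by rewrite -Ts; apply: TK; apply/imgs_imp_gramE; exists s.
by have := uC _ (AK _ KYAz); rewrite !mulmxA AYA.
Qed.

Lemma obtuse_acute_D : obtuse M N A K -> acute M D.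
Proof.
have [_ YAY AYs _] := mpinvP A.
have YtE : Y^T = A *m Y *m Y^T.
  by rewrite -{1}YAY !trmx_mul mulmxA -trmx_mul AYs.
have Dsub w : D w ->
    vinter (idual M (imgs N (imul N A 1%:M) K)) (irange N (imul N A 1%:M)) w.
  case/imgs_iadj_impE=> s [sK ->]; split.
    move=> _ [t [Kt ->]]; rewrite imul_weight1 // iprodE dot_mulmxl trmxK.
    by rewrite (mulmxA Y M) mpinv_weight -mulmxA -iprodE; exact: sK (KYA Kt).
  by exists (Y *m (Y^T *m s)); rewrite imul_weight1 // !mulmxA -YtE.
by move=> ob x y /Dsub Dx /Dsub Dy; exact: ob.
Qed.

End ObtuseCone.

Unset Implicit Arguments.

Theorem theorem3p16 (m n : nat) (M : 'M[R]_m) (N : 'M[R]_n)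
    (A : 'M[R]_(m, n)) (K : vset n) :
  is_weight M -> is_weight N ->
  imul M 1%:M A = imul N A 1%:M ->
  is_closed (irange N (imul N A 1%:M)) ->
  is_cone K -> is_closed K ->
  vsubset (imgs N (imul M (imp M N A) A) K) K ->
  let D := imgs N (imul N (iadj N M (imp M N A)) 1%:M) (idual N K) in
  (acute M D <->
     vsubset (imgs N (imp N N (imul M (iadj M N A) A)) (idual N K))
            (msum K (inull N (imul N A 1%:M)))) /\
  (vsubset (imgs N (imp N N (imul M (iadj M N A) A)) (idual N K))
          (msum K (inull N (imul N A 1%:M))) <->
     obtuse M N A K).
Proof.
move=> wM wN hMA _ coneK closedK hP D.
have MA : M *m A = A *m N by move: hMA; rewrite /imul mul1mx mulmx1.
have KYA s : K s -> K (mpinv A *m (A *m s)).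
  by move=> Ks; rewrite -(imul_imp_weight wM wN MA); apply: hP; exists s.
have bidual := subset_idual_idual coneK closedK
  (imgs N (imp N N (imul M (iadj M N A) A)) (idual N K)) wN.
have null_iff := msum_null_iff wM wN MA KYA.
split; first exact: iff_trans (acute_D_iff wM wN MA K) (iff_trans bidual (iff_sym null_iff)).
apply: iff_trans null_iff _; split; first exact: sub_K_obtuse.
by move/(obtuse_acute_D wM wN MA KYA)/(acute_D_iff wM wN MA K)/bidual.
Qed.
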